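(* Let $T=(Q,\Sigma,\Delta,R,q_0)$ be a top-down tree transducer and let $A$ be the domain automaton of $T$. Let $S\neq\emptyset$ be a state of $A$ (i.e., a nonempty subset of $Q$). Then for every $s\in T_\Sigma$: $s\in\text{dom}(S)$ if and only if $s\in\bigcap_{q\in S}\text{dom}(q)$.
   Context: A top-down tree transducer $T=(Q,\Sigma,\Delta,R,q_0)$ has finite state set $Q$, ranked input/output alphabets $\Sigma,\Delta$, initial state $q_0$, and finite rule set $R$ of rules $q(a(x_1,\dots,x_k))\to t$ with $a\in\Sigma_k$ ($\Sigma_k$ = symbols of rank $k$) and $t$ a tree over $\Delta$ whose leaves may additionally be of the form $q'(x_i)$, $q'\in Q$, $i\in[k]$; rules are used as rewrite rules in the usual way. For a state $q$, $\text{dom}(q)$ is the set of $s\in T_\Sigma$ such that some tree over $\Delta$ is derivable from $q(s)$. A top-down tree automaton is a transducer with $\Sigma=\Delta$ all of whose rules have the form $p(a(x_1,\dots,x_k))\to a(p_1(x_1),\dots,p_k(x_k))$. For $q\in Q$ and $a\in\Sigma_k$, $\text{rhs}_T(q,a)$ is the set of right-hand sides of rules of $T$ with left-hand side $q(a(x_1,\dots,x_k))$. For a set $\Gamma$ of right-hand sides, $\Gamma[x_i]$ is the set of all $q'\in Q$ such that $q'(x_i)$ occurs in some tree of $\Gamma$. The domain automaton $A$ of $T$ is the top-down tree automaton over $\Sigma$ whose states are all subsets of $Q$, with initial state $\{q_0\}$, and with the following rules: for every $a\in\Sigma_k$, every nonempty $S=\{q_1,\dots,q_n\}\subseteq Q$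 and every choice of nonempty subsets $\Gamma_1\subseteq\text{rhs}_T(q_1,a),\dots,\Gamma_n\subseteq\text{rhs}_T(q_n,a)$, the rule $S(a(x_1,\dots,x_k))\to a(S_1(x_1),\dots,S_k(x_k))$ with $S_i=\bigcup_{j=1}^n\Gamma_j[x_i]$; and for every $a\in\Sigma_k$ the rule $\emptyset(a(x_1,\dots,x_k))\to a(\emptyset(x_1),\dots,\emptyset(x_k))$. For a state $S$ of $A$, $\text{dom}(S)$ is the set of trees $s$ from which (starting with $S(s)$) a tree over $\Sigma$ is derivable. *)

From Stdlib Require Import Relations List.
From mathcomp Require Import all_boot.

Set Implicit Arguments.
Unset Strict Implicit.
Unset Printing Implicit Defensive.

(** Ranked trees over an alphabet F (rank function supplied separately). *)
Inductive tree (F : Type) : Type := Node : F -> seq (tree F) -> tree F.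
Arguments Node {F}.

Inductive ranked (F : Type) (rk : F -> nat) : tree F -> Prop :=
| ranked_Node a ts : size ts = rk a ->
    (forall t, List.In t ts -> ranked rk t) -> ranked rk (Node a ts).

(** Right-hand sides of rules: trees over the output alphabet D whose leaves may
    be q'(x_i); the variable x_(i+1) is encoded by the index i (0-based). *)
Inductive rhs (P D : Type) : Type :=
| RD : D -> seq (rhs P D) -> rhs P D
| RQ : P -> nat -> rhs P D.
Arguments RD {P D}.
Arguments RQ {P D}.

Inductive rhs_ok (P D : Type) (rkD : D -> nat) (k : nat) : rhs P D -> Prop :=
| rhs_ok_D d rs : size rs = rkD d ->
    (forall r, List.In r rs -> rhs_ok rkD k r) -> rhs_ok rkD k (RD d rs)
| rhs_ok_Q q i : i < k -> rhs_ok rkD k (RQ q i).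

Inductive sform (P S D : Type) : Type :=
| SD : D -> seq (sform P S D) -> sform P S D
| SQ : P -> tree S -> sform P S D.
Arguments SD {P S D}.
Arguments SQ {P S D}.

Section Derivations.
Variables (P S D : Type).

(** Instantiate the rhs r of a rule applied at input tree t = a(s_1,...,s_k):
    every leaf q'(x_(i+1)) becomes q'(s_(i+1)).  (The fallback for an
    out-of-range variable is never used for legal rules, cf. rhs_ok.) *)
Fixpoint inst (t : tree S) (r : rhs P D) : sform P S D :=
  match r with
  | RD d rs => SD d (map (inst t) rs)
  | RQ q i => let: Node _ ss := t in
              match List.nth_error ss i with
              | Some si => SQ q si
              | None => SQ q t
              end
  end.

Fixpoint embed (t : tree D) : sform P S D :=
  let: Node d ts := t in SD d (map embed ts).

(** One rewriting step with rule relation rl: rl q a r means that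
    q(a(x_1,...,x_k)) -> r is a rule. *)
Inductive step (rl : P -> S -> rhs P D -> Prop) : sform P S D -> sform P S D -> Prop :=
| step_root q a ss r : rl q a r -> step rl (SQ q (Node a ss)) (inst (Node a ss) r)
| step_ctx d l x y rr : step rl x y -> step rl (SD d (l ++ x :: rr)) (SD d (l ++ y :: rr)).

Definition derives rl := clos_refl_trans (sform P S D) (step rl).

Definition domain rl (q : P) (s : tree S) : Prop :=
  exists t : tree D, derives rl (SQ q s) (embed t).

End Derivations.

(** Top-down tree transducer T = (Q, Sigma, Delta, R, q0) with finite Q;
    the finite rule set R is given by the finite lists rules q a = rhs_T(q,a). *)
Record tdt (Q : finType) (Sig Del : Type) := TDT {
  rkI : Sig -> nat;
  rkO : Del -> nat;
  rules : Q -> Sig -> seq (rhs Q Del);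
  q0 : Q
}.

Definition tdt_valid (Q : finType) Sig Del (T : tdt Q Sig Del) : Prop :=
  forall q a r, List.In r (rules T q a) -> rhs_ok (rkO T) (rkI T a) r.

Definition tdt_rule (Q : finType) Sig Del (T : tdt Q Sig Del) :
  Q -> Sig -> rhs Q Del -> Prop := fun q a r => List.In r (rules T q a).

Definition tdt_dom (Q : finType) Sig Del (T : tdt Q Sig Del) (q : Q) (s : tree Sig) :=
  domain (tdt_rule T) q s.

Fixpoint occ (Q : eqType) Del (q : Q) (i : nat) (r : rhs Q Del) : bool :=
  match r with
  | RD _ rs => has (occ q i) rs
  | RQ q' j => (q' == q) && (j == i)
  end.

(** For nonempty S and choices of nonempty Gamma_q ⊆ rhs_T(q,a) (q ∈ S):
      S(a(x_1..x_k)) -> a(S_1(x_1),...,S_k(x_k)),  S_i = ⋃_{q∈S} Gamma_q[x_i];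
    and ∅(a(x_1..x_k)) -> a(∅(x_1),...,∅(x_k)). *)
Definition dom_aut_rule (Q : finType) Sig Del (T : tdt Q Sig Del) :
  {set Q} -> Sig -> rhs {set Q} Sig -> Prop :=
  fun S a r =>
    (S = set0 /\ r = RD a [seq RQ set0 i | i <- iota 0 (rkI T a)])
    \/
    (S != set0 /\
     exists Gamma : Q -> seq (rhs Q Del),
       (forall q, q \in S ->
          Gamma q <> [::] /\ (forall g, List.In g (Gamma q) -> List.In g (rules T q a))) /\
       r = RD a [seq RQ [set q' | [exists q in S, has (occ q' i) (Gamma q)]] i
                | i <- iota 0 (rkI T a)]).

Definition aut_dom (Q : finType) Sig Del (T : tdt Q Sig Del) (S : {set Q}) (s : tree Sig) :=
  domain (dom_aut_rule T) S s.

(* A sentential form derives an output tree iff each of its leaves q(s) does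
   (is productive), and q(a(s_1,...,s_k)) is productive iff some rule
   q(a(x_1,...,x_k)) -> r has all its leaves q'(x_i) productive on s_i.  Hence
   a(s_1,...,s_k) lies in dom(q) for every q in S iff one can pick, for each
   q in S, such a rule; collecting their states per variable is exactly a rule
   of A with child states S_i, and by induction s_i lies in dom(S_i) iff it lies
   in dom(q') for all q' in S_i.  Validity of the rules of T guarantees that
   every variable x_i of a rule names an actual subtree s_i. *)

From Stdlib Require Import Relations List IndefiniteDescription.
From mathcomp Require Import all_boot.

Set Implicit Arguments.
Unset Strict Implicit.
Unset Printing Implicit Defensive.

Lemma rhs_nested_ind (P D : Type) (Pr : rhs P D -> Prop) :
  (forall d rs, (forall r, In r rs -> Pr r) -> Pr (RD d rs)) ->
  (forall q i, Pr (RQ q i)) ->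
  forall r, Pr r.
Proof.
move=> HD HQ; fix IH 1; case=> [d rs|q i]; last exact: HQ.
apply: HD; elim: rs => [|r rs IHrs] x; first by case.
by case=> [<-|/IHrs //]; apply: IH.
Qed.

Lemma has_In (T : Type) (p : pred T) (s : seq T) :
  has p s <-> exists x, In x s /\ p x.
Proof. exact: existsb_exists. Qed.

Section Productive.
Variables (P S D : Type) (rl : P -> S -> rhs P D -> Prop).

Definition productive (x : sform P S D) : Prop :=
  exists t : tree D, derives rl x (embed P S t).

Lemma derives_trans x y z : derives rl x y -> derives rl y z -> derives rl x z.
Proof. exact: rt_trans. Qed.

Lemma derives_productive x y : derives rl x y -> productive y -> productive x.
Proof. by move=> Hxy [t Ht]; exists t; exact: derives_trans Hxy Ht. Qed.

Lemma derives_SD_ctx d l r x y : derives rl x y ->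
  derives rl (SD d (l ++ x :: r)) (SD d (l ++ y :: r)).
Proof.
elim=> [x' y' Hxy|x'|x' y' z' _ Hxy _ Hyz]; last exact: derives_trans Hxy Hyz.
  by apply: rt_step; constructor.
exact: rt_refl.
Qed.

Lemma derives_SD d xs ys : Forall2 (derives rl) xs ys ->
  derives rl (SD d xs) (SD d ys).
Proof.
move=> Hxys; suff /(_ [::]) : forall l,
    derives rl (SD d (l ++ xs)) (SD d (l ++ ys)) by [].
elim: Hxys => [|x y {}xs {}ys Hxy _ IH] l; first exact: rt_refl.
apply: derives_trans (derives_SD_ctx d l xs Hxy) _.
by have := IH (rcons l y); rewrite -!cats1 -!catA.
Qed.

Lemma productive_SD_intro d xs :
  (forall x, In x xs -> productive x) -> productive (SD d xs).
Proof.
move=> Hxs.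
have [ts Hts] : exists ts, Forall2 (derives rl) xs (map (@embed P S D) ts).
  elim: xs Hxs => [|x xs IH] Hxs; first by exists [::].
  have [t Ht] := Hxs x (or_introl erefl).
  have [ts Hts] := IH (fun y Hy => Hxs y (or_intror Hy)).
  by exists (t :: ts); constructor.
by exists (Node d ts); apply: derives_SD.
Qed.

Lemma productive_SD_elim d xs x : productive (SD d xs) -> In x xs -> productive x.
Proof.
move=> [t Ht]; have {Ht} := clos_rt_rt1n _ _ _ _ Ht.
move Eu: (SD d xs) => u; move Ev: (embed P S t) => v Huv.
elim: Huv d xs x Eu Ev => [u' | u' u'' v' Hstep _ IH] d xs x Eu Ev.
  move: Ev; rewrite -Eu; case: t => d' ts /= [_ <-] /in_map_iff [t [<- _]].
  by exists t; apply: rt_refl.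
case: Hstep Eu IH => [q a ss r _ | d' l x0 y0 rr Hxy] // [_ ->] IH.
move=> /in_app_iff [Hx | [<- | Hx]].
- by apply: IH => //; apply/in_app_iff; left.
- apply: derives_productive (rt_step _ _ _ _ Hxy) _.
  by apply: IH => //; apply/in_app_iff; right; left.
- by apply: IH => //; apply/in_app_iff; right; right.
Qed.

Lemma productive_SD d xs :
  productive (SD d xs) <-> forall x, In x xs -> productive x.
Proof.
split; last exact: productive_SD_intro.
move=> Hp x; exact: productive_SD_elim Hp.
Qed.

Lemma productive_SQ_Node q a ss :
  productive (SQ q (Node a ss)) <->
  exists2 r, rl q a r & productive (inst (Node a ss) r).
Proof.
split=> [[t Ht] | [r Hr /derives_productive]]; last first.
  by apply; apply: rt_step; constructor.
have Ht1 := clos_rt_rt1n _ _ _ _ Ht.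
inversion Ht1 as [Et|u v Hstep Hrest]; first by case: t {Ht Ht1} Et.
inversion Hstep as [q' a' ss' r Hr|]; subst.
by exists r => //; exists t; apply: clos_rt1n_rt.
Qed.

End Productive.

(* Out-of-range indices fall back to [t] itself, exactly as in [inst]. *)
Definition subtree (S : Type) (t : tree S) (i : nat) : tree S :=
  let: Node _ ss := t in
  if List.nth_error ss i is Some si then si else t.

Lemma inst_RQ (P S D : Type) (t : tree S) (q : P) i :
  inst t (RQ q i : rhs P D) = SQ q (subtree t i).
Proof. by case: t => a ss /=; case: nth_error. Qed.

Lemma subtree_In (S : Type) (a : S) ss i :
  i < size ss -> In (subtree (Node a ss) i) ss.
Proof.
move=> Hi /=; case Ei: nth_error => [si|]; first exact: nth_error_In Ei.
have : size ss <= i by apply/leP/nth_error_None.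
by rewrite leqNgt Hi.
Qed.

Lemma productive_inst (P : eqType) (S D : Type) (rl : P -> S -> rhs P D -> Prop)
    t r :
  productive rl (inst t r) <->
  forall q i, occ q i r -> productive rl (SQ q (subtree t i)).
Proof.
elim/rhs_nested_ind: r => [d rs IH | q' j]; last first.
  rewrite inst_RQ; split=> [Hp q i /andP [/eqP <- /eqP <-] // | ]; apply.
  by rewrite /= !eqxx.
rewrite /= productive_SD; split=> [Hp q i /has_In [r [Hr Hocc]] | Hp x].
  by apply: (IH r Hr).1 Hocc; apply: Hp; apply: in_map.
move=> /in_map_iff [r [<- Hr]]; apply/(IH r Hr) => q i Hocc.
by apply: Hp; apply/has_In; exists r.
Qed.

Lemma rhs_ok_occ (P : eqType) (D : Type) (rkD : D -> nat) k (r : rhs P D) q i :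
  rhs_ok rkD k r -> occ q i r -> i < k.
Proof.
elim/rhs_nested_ind: r => [d rs IH | q' j] Hr /=.
  move=> /has_In [r [Hin Hocc]]; inversion_clear Hr as [? ? _ Hrs |].
  exact: IH Hin (Hrs r Hin) Hocc.
by inversion_clear Hr => /andP [_ /eqP <-].
Qed.

Section DomainAutomaton.
Variables (Q : finType) (Sig Del : Type) (T : tdt Q Sig Del).

Definition aut_rhs (a : Sig) (Sf : nat -> {set Q}) : rhs {set Q} Sig :=
  RD a [seq RQ (Sf i) i | i <- iota 0 (rkI T a)].

Definition rhs_states (S : {set Q}) (Gamma : Q -> seq (rhs Q Del)) (i : nat) :
  {set Q} :=
  [set q' | [exists q in S, has (occ q' i) (Gamma q)]].

Lemma occ_aut_rhs a Sf q i :
  occ q i (aut_rhs a Sf) = (i < rkI T a) && (q == Sf i).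
Proof.
rewrite /= has_map; apply/hasP/andP => [[j] | [Hi /eqP ->]].
  by rewrite mem_iota add0n => /andP [_ Hj] /andP [/eqP <- /eqP <-]; rewrite eqxx.
by exists i; rewrite /= ?mem_iota ?eqxx.
Qed.

Lemma productive_aut_rhs a ss Sf :
  productive (dom_aut_rule T) (inst (Node a ss) (aut_rhs a Sf)) <->
  forall i, i < rkI T a ->
    productive (dom_aut_rule T) (SQ (Sf i) (subtree (Node a ss) i)).
Proof.
rewrite productive_inst; split=> [Hp i Hi | Hp q i].
  by apply: Hp; rewrite occ_aut_rhs Hi eqxx.
by rewrite occ_aut_rhs => /andP [Hi /eqP ->]; apply: Hp.
Qed.

Lemma productive_rule_choice (S : {set Q}) a ss :
  (forall q, q \in S -> productive (tdt_rule T) (SQ q (Node a ss))) ->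
  exists r : Q -> rhs Q Del, forall q, q \in S ->
    In (r q) (rules T q a) /\ productive (tdt_rule T) (inst (Node a ss) (r q)).
Proof.
move=> HS.
pose good q r := In r (rules T q a) /\ productive (tdt_rule T) (inst (Node a ss) r).
apply: (functional_choice (fun q r => q \in S -> good q r)) => q.
have [Hq | _] := boolP (q \in S); last by exists (RQ q 0).
by have [r Hr Hp] := (productive_SQ_Node _ _ _ _).1 (HS q Hq); exists r.
Qed.

Lemma productive_states_aut s : ranked (rkI T) s -> forall S : {set Q},
  (forall q, q \in S -> productive (tdt_rule T) (SQ q s)) ->
  productive (dom_aut_rule T) (SQ S s).
Proof.
elim=> a ss Hsize _ IH S HS.
have [Sf HSf_rule HSf] : exists2 Sf, dom_aut_rule T S a (aut_rhs a Sf) &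
    forall i q, q \in Sf i -> productive (tdt_rule T) (SQ q (subtree (Node a ss) i)).
  have [-> | HS0] := eqVneq S set0.
    by exists (fun _ => set0) => [|i q]; [left | rewrite inE].
  have [r Hr] := productive_rule_choice HS.
  exists (rhs_states S (fun q => [:: r q])).
    right; split=> //; exists (fun q => [:: r q]); split=> // q Hq.
    by split=> // g [<- | []]; exact: (Hr q Hq).1.
  move=> i q'; rewrite inE => /existsP [q /andP [Hq]] /=; rewrite orbF => Hocc.
  exact: (productive_inst _ _ _).1 (Hr q Hq).2 q' i Hocc.
apply/productive_SQ_Node; exists (aut_rhs a Sf) => //.
apply/productive_aut_rhs => i Hi; apply: IH => [|q /HSf //].
by apply: subtree_In; rewrite Hsize.
Qed.

Hypothesis HT : tdt_valid T.

Lemma productive_aut_states s : ranked (rkI T) s -> forall S : {set Q},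
  productive (dom_aut_rule T) (SQ S s) ->
  forall q, q \in S -> productive (tdt_rule T) (SQ q s).
Proof.
elim=> a ss Hsize _ IH S /productive_SQ_Node [r Hr Hp] q Hq.
case: Hr => [[ES _] | [_ [Gamma [HGamma Er]]]]; first by rewrite ES inE in Hq.
move: Hp; rewrite Er => /(productive_aut_rhs _ _ (rhs_states S Gamma)) Hsub.
have [HGamma_ne HGamma_rules] := HGamma q Hq.
have [g Hg] : exists g, In g (Gamma q).
  by case: (Gamma q) HGamma_ne => [|g gs] // _; exists g; left.
apply/productive_SQ_Node; exists g; first exact: HGamma_rules.
apply/productive_inst => q' i Hocc.
have Hi : i < rkI T a := rhs_ok_occ (HT (HGamma_rules g Hg)) Hocc.
apply: (IH _ _ (rhs_states S Gamma i)); first by apply: subtree_In; rewrite Hsize.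
  exact: Hsub.
by rewrite inE; apply/existsP; exists q; rewrite Hq; apply/has_In; exists g.
Qed.

End DomainAutomaton.

Theorem lemma1 (Q : finType) (Sig Del : Type) (T : tdt Q Sig Del) :
  tdt_valid T ->
  forall S : {set Q}, S != set0 ->
  forall s : tree Sig, ranked (rkI T) s ->
    (aut_dom T S s <-> (forall q, q \in S -> tdt_dom T q s)).
Proof.
move=> HT S _ s Hs; split; first exact: productive_aut_states.
exact: productive_states_aut.
Qed.
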